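(* Let $n\ge 1$, $k\ge 1$, and let $\mathcal P(n,1,1)$ be the set of lattice paths with steps $U=(1,1)$ and $D=(1,-1)$ from $(0,0)$ to $(2n+1,1)$. For each $j=1,2,\dots,2n+1$, the number of paths in $\mathcal P(n,1,1)$ with exactly $k$ circular peaks and exactly $j$ vertices on or below the $x$-axis is independent of $j$ and equals $$\frac{1}{2n+1}\left(\binom{n}{k-1}\binom{n}{k}+\binom{n+1}{k}\binom{n-1}{k-1}\right).$$
   Context: A peak of a path is an occurrence of two consecutive steps $UD$. The circular peaks of a path $p\in\mathcal P(n,1,1)$ are all its peaks, together with its initial vertex in the case that $p$ starts with a down step and ends with an up step. A vertex is on or below the $x$-axis if its $y$-coordinate is $\le 0$. *)

From mathcomp Require Import all_boot all_order all_algebra.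
Set Implicit Arguments. Unset Strict Implicit. Unset Printing Implicit Defensive.
Import GRing.Theory Num.Theory.

(* A lattice path of length m is a sequence of m steps; true = U = (1,1),
   false = D = (1,-1). *)

(* P(n,1,1): paths from (0,0) to (2n+1,1), i.e. 2n+1 steps with n+1 up steps. *)
Definition P_n11 (n : nat) (p : (2 * n + 1).-tuple bool) : bool :=
  count id p == n.+1.

Definition height (s : seq bool) (i : nat) : int :=
  (count id (take i s))%:Z - (count negb (take i s))%:Z.

Definition vertices_le0 (s : seq bool) : nat :=
  count (fun i => (height s i <= 0)%R) (iota 0 (size s).+1).

Definition peaks (s : seq bool) : nat :=
  count (fun i => nth false s i && ~~ nth false s i.+1) (iota 0 (size s).-1).

Definition circular_peaks (s : seq bool) : nat :=
  peaks s + ((~~ head true s) && last false s : nat).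

From mathcomp Require Import all_boot all_order all_algebra.
From mathcomp Require Import zify ring.
Import Order.TTheory GRing.Theory Num.Theory.
Set Implicit Arguments. Unset Strict Implicit. Unset Printing Implicit Defensive.

(* Cycle lemma: for a path s of length L ending at height 1, the keys
   L * h(t) - t (0 <= t < L, h the height) are pairwise distinct, and the
   rotation of s starting at vertex r has exactly as many vertices on or below
   the axis as there are t whose key is at most that of r.  Hence, over the L
   rotations of s, this number takes each value 1..L exactly once.  Circular
   peaks are the UD factors of the cyclic word, so they are invariant under
   rotation, and double counting shows that the number of paths in question is
   1/L times the number of paths in P(n,1,1) with k circular peaks.  The latter
   is computed by cutting a path into maximal runs of equal steps. *)

Definition is_UD (st : bool * bool) : bool := st.1 && ~~ st.2.

Lemma peaksE s : peaks s = count is_UD (zip s (behead s)).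
Proof.
rewrite /peaks; elim: s => [//|x [//|y t] IH] /=.
by rewrite -IH -(addn0 1) iotaDl count_map.
Qed.

Lemma circular_peaks_cons f w :
  circular_peaks (f :: w) = peaks (f :: w) + (~~ f && last f w).
Proof. by []. Qed.

Lemma count_UD_zip_rcons f w g :
  count is_UD (zip (f :: w) (rcons w g)) =
  count is_UD (zip (f :: w) w) + (last f w && ~~ g).
Proof. by elim: w f => [|y w IH] f /=; rewrite ?addn0 ?IH ?addnA. Qed.

Lemma circular_peaksE s : circular_peaks s = count is_UD (zip s (rot 1 s)).
Proof.
case: s => [//|f w]; rewrite circular_peaks_cons peaksE rot1_cons.
by rewrite count_UD_zip_rcons andbC.
Qed.

Lemma zip_take (S T : Type) (s : seq S) (t : seq T) r :
  zip (take r s) (take r t) = take r (zip s t).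
Proof. by elim: r s t => [|r IH] [|x s] [|y t] //=; rewrite IH. Qed.

Lemma zip_drop (S T : Type) (s : seq S) (t : seq T) r :
  zip (drop r s) (drop r t) = drop r (zip s t).
Proof.
by elim: r s t => [|r IH] [|x s] [|y t] //=; rewrite ?IH //; case: drop.
Qed.

Lemma zip_rot (S T : Type) (s : seq S) (t : seq T) r : size s = size t ->
  zip (rot r s) (rot r t) = rot r (zip s t).
Proof. by move=> eq_st; rewrite /rot zip_cat ?size_drop ?eq_st // zip_drop zip_take. Qed.

Lemma count_rot (T : Type) (a : pred T) r s : count a (rot r s) = count a s.
Proof. by rewrite /rot count_cat addnC -count_cat cat_take_drop. Qed.

Lemma circular_peaks_rot r s : circular_peaks (rot r s) = circular_peaks s.
Proof. by rewrite !circular_peaksE rot_rot zip_rot ?size_rot // count_rot. Qed.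

Local Open Scope ring_scope.

Lemma height_catl a b i : (i <= size a)%N -> height (a ++ b) i = height a i.
Proof.
move=> le_ia; rewrite /height take_cat; case: ltnP => // le_ai.
have -> : i = size a by apply/eqP; rewrite eqn_leq le_ia.
by rewrite subnn take0 cats0 take_size.
Qed.

Lemma height_catr a b i :
  height (a ++ b) (size a + i) = height a (size a) + height b i.
Proof.
rewrite /height take_cat ltnNge leq_addr addKn take_size !count_cat !PoszD.
ring.
Qed.

Lemma height_take s r i : (i <= r)%N -> height (take r s) i = height s i.
Proof. by move=> le_ir; rewrite /height take_takel. Qed.

Lemma height_drop s r i : height (drop r s) i = height s (r + i) - height s r.
Proof.
have split_take P : count P (take (r + i) s) =
    (count P (take r s) + count P (take i (drop r s)))%N.
  by rewrite takeD count_cat.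
by rewrite /height !split_take !PoszD; ring.
Qed.

Lemma height_rot_lo s r i : (i <= size s - r)%N ->
  height (rot r s) i = height s (r + i) - height s r.
Proof. by move=> le_i; rewrite /rot height_catl ?size_drop // height_drop. Qed.

Lemma height_rot_hi s r i : (r <= size s)%N -> (i <= r)%N ->
  height (rot r s) (size s - r + i) = height s (size s) - height s r + height s i.
Proof.
move=> le_r le_i; rewrite /rot -(size_drop r) height_catr height_take //.
rewrite height_drop size_drop subnKC //.
Qed.

Definition cycle_key s t : int := (size s)%:Z * height s t - t%:Z.

Definition cycle_rank s r : nat :=
  count (fun t => cycle_key s t <= cycle_key s r) (iota 0 (size s)).

Lemma height_rot_le0_lo s r i : (r + i < size s)%N ->
  (height (rot r s) i <= 0) = (cycle_key s (r + i) <= cycle_key s r).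
Proof.
move=> lt_ri; rewrite height_rot_lo /cycle_key; last by lia.
move: (height s (r + i)) (height s r) => x y.
by apply/idP/idP => ?; nia.
Qed.

Lemma height_rot_le0_hi s r i : height s (size s) = 1 -> (i < r < size s)%N ->
  (height (rot r s) (size s - r + i) <= 0) = (cycle_key s i <= cycle_key s r).
Proof.
move=> hs /andP[lt_ir lt_r]; rewrite height_rot_hi ?hs /cycle_key; [|lia|lia].
move: (height s i) (height s r) => x y.
by apply/idP/idP => ?; nia.
Qed.

Lemma vertices_le0_rot s r : height s (size s) = 1 -> (r < size s)%N ->
  vertices_le0 (rot r s) = cycle_rank s r.
Proof.
move=> hs lt_r; have le_r := ltnW lt_r.
have top : height (rot r s) (size s) = 1.
  by have := height_rot_hi le_r (leqnn r); rewrite subnK // hs subrK.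
have iota_shift m k : iota m k = map (addn m) (iota 0 k) by rewrite -iotaDl addn0.
set below := fun i => height (rot r s) i <= 0.
set lower := fun t => cycle_key s t <= cycle_key s r.
have lo : count below (iota 0 (size s - r)) = count lower (iota r (size s - r)).
  rewrite [in RHS]iota_shift count_map; apply: eq_in_count => i.
  by rewrite mem_iota add0n => /andP[_ lt_i]; apply: height_rot_le0_lo; lia.
have hi : count below (iota (size s - r) r) = count lower (iota 0 r).
  rewrite iota_shift count_map; apply: eq_in_count => i.
  rewrite mem_iota add0n => /andP[_ lt_i].
  by apply: height_rot_le0_hi; rewrite ?lt_i.
rewrite /vertices_le0 /cycle_rank size_rot -addn1 iotaD count_cat /=.
rewrite add0n top ler10 !addn0.
rewrite -[in LHS](subnK le_r) iotaD add0n count_cat lo hi addnC.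
by rewrite -count_cat -iotaD subnKC.
Qed.

Local Close Scope ring_scope.

Lemma sub_count_lt (T : eqType) (a1 a2 : pred T) s x :
  subpred a1 a2 -> x \in s -> a2 x -> ~~ a1 x -> count a1 s < count a2 s.
Proof.
move=> sub12; elim: s => [//|y s IH]; rewrite inE /=.
case/orP=> [/eqP <- -> /negbTE -> | s_x a2x a1'x]; first by rewrite ltnS sub_count.
have := IH s_x a2x a1'x; case a1y: (a1 y); last by lia.
by rewrite (sub12 _ a1y) ltn_add2l.
Qed.

Lemma cycle_key_inj s : {in gtn (size s) &, injective (cycle_key s)}.
Proof.
move=> a b; rewrite !inE /cycle_key => lt_a lt_b.
move: (height s a) (height s b) => x y e.
by case: (ltgtP x y) => [lt_xy|lt_yx|eq_xy]; [nia|nia|rewrite eq_xy in e; lia].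
Qed.

Lemma cycle_rank_gt0 s r : r < size s -> 0 < cycle_rank s r.
Proof. by move=> lt_r; rewrite -has_count; apply/hasP; exists r; rewrite ?mem_iota. Qed.

Lemma cycle_rank_le s r : cycle_rank s r <= size s.
Proof. by rewrite (leq_trans (count_size _ _)) ?size_iota. Qed.

Lemma cycle_rank_inj s : {in gtn (size s) &, injective (cycle_rank s)}.
Proof.
have rank_lt a b : b < size s -> (cycle_key s a < cycle_key s b)%R ->
    cycle_rank s a < cycle_rank s b.
  move=> lt_b lt_ab; apply: (sub_count_lt (x := b)).
  - by move=> t /= le_ta; rewrite (le_trans le_ta) ?ltW.
  - by rewrite mem_iota.
  - by [].
  - by rewrite -ltNge.
move=> a b lt_a lt_b eq_ab; apply: (cycle_key_inj lt_a lt_b).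
move: lt_a lt_b; rewrite !inE => lt_a lt_b.
case: (ltgtP (cycle_key s a) (cycle_key s b)) => // [/(rank_lt a b lt_b)|/(rank_lt b a lt_a)];
  by rewrite eq_ab ltnn.
Qed.

Lemma card_rot_vertices_le0 s j : height s (size s) = 1%R -> 0 < j <= size s ->
  #|[set r : 'I_(size s) | vertices_le0 (rot r s) == j]| = 1.
Proof.
move=> hs /andP[j_gt0 le_j].
have rank_ord (r : 'I_(size s)) : (cycle_rank s r).-1 < size s.
  by rewrite prednK ?cycle_rank_le ?cycle_rank_gt0.
pose g r := Ordinal (rank_ord r).
have g_inj : injective g.
  move=> a b /(congr1 (succn \o val)) /=; rewrite !prednK ?cycle_rank_gt0 // => eq_ab.
  exact/val_inj/(cycle_rank_inj (ltn_ord a) (ltn_ord b)).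
have j_ord : j.-1 < size s by rewrite prednK.
have -> : [set r : 'I_(size s) | vertices_le0 (rot r s) == j] = g @^-1: [set Ordinal j_ord].
  apply/setP => r; rewrite !inE vertices_le0_rot ?ltn_ord // -val_eqE /=.
  by have := cycle_rank_gt0 (ltn_ord r); lia.
by rewrite card_preimset // cards1.
Qed.

Fixpoint words m : seq (seq bool) :=
  if m is m'.+1 then [seq true :: w | w <- words m'] ++ [seq false :: w | w <- words m']
  else [:: [::]].

Lemma mem_words m s : (s \in words m) = (size s == m).
Proof.
elim: m s => [|m IH] [|x s] //=; rewrite mem_cat.
  by apply/orP => -[] /mapP[].
have cons_inj b : injective (cons b) by move=> ? ? [].
rewrite eqSS -IH; case: x; rewrite mem_map; try exact: cons_inj.
  by rewrite [X in _ || X](_ : _ = false) ?orbF //; apply/mapP => -[].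
by rewrite [X in X || _](_ : _ = false) //; apply/mapP => -[].
Qed.

Lemma words_uniq m : uniq (words m).
Proof.
elim: m => [//|m IH] /=; rewrite cat_uniq !map_inj_uniq ?IH //= => [|? ? []//|? ? []//].
by rewrite andbT; apply/hasP => -[_ /mapP[? _ ->] /mapP[]].
Qed.

Lemma sum_tuples_words m (F : pred (seq bool)) :
  \sum_(p : m.-tuple bool) F p = count F (words m).
Proof.
have perm_words : perm_eq [seq val p | p <- enum {: m.-tuple bool}] (words m).
  apply: uniq_perm; first (rewrite map_inj_uniq; [exact: enum_uniq | exact: val_inj]).
    exact: words_uniq.
  move=> s; rewrite mem_words; apply/mapP/eqP => [[p _ ->]|size_s]; first exact: size_tuple.
  by exists (Tuple (introT eqP size_s)); rewrite ?mem_enum.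
rewrite -sum1_count -(perm_big _ perm_words) big_map big_enum_cond [RHS]big_mkcond.
by apply: eq_bigr => p _; case: (F p).
Qed.

Definition ncompositions (a r : nat) : nat :=
  match a, r with
  | 0, 0 => 1
  | a'.+1, r'.+1 => 'C(a', r')
  | _, _ => 0
  end.

Lemma ncompositions0n r : ncompositions 0 r = (r == 0).
Proof. by case: r. Qed.

Lemma ncompositionsn0 a : ncompositions a 0 = (a == 0).
Proof. by case: a. Qed.

Lemma ncompositionsS a r :
  ncompositions a.+1 r.+1 = ncompositions a r.+1 + ncompositions a r.
Proof. by case: a r => [|a] [|r] //=; rewrite ?bin0n ?binS ?bin0 ?addn0. Qed.

Definition nwords_type m u k (f l : bool) : nat :=
  count (fun w => [&& count id (f :: w) == u, peaks (f :: w) == k & last f w == l])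
    (words m).

Lemma nwords_typeS m u k f l :
  nwords_type m.+1 u k f l =
    (f <= u) * nwords_type m (u - f) k true l
  + ((f <= u) && (f <= k)) * nwords_type m (u - f) (k - f) false l.
Proof.
have add_eq (b : bool) x n : (b + x == n) = (b <= n) && (x == n - b).
  by case: b n => [[|n]|n] //=; rewrite ?add1n ?eqSS ?subSS ?subn0.
have mul_count (b : bool) P s : b * count P s = count (fun x => b && P x) s.
  by case: b; rewrite ?mul1n ?mul0n ?count_pred0.
rewrite /nwords_type [words _]/= count_cat !count_map !mul_count.
congr (_ + _); apply: eq_count => w; rewrite /= !peaksE /= -!peaksE !add_eq.
all: by case: f; rewrite /= ?subn0 // -!andbA; congr andb; rewrite andbCA.
Qed.

(* The u up steps of f :: w form k + l maximal runs and its m + 1 - u down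
   steps form k + ~~ f maximal runs. *)
Lemma nwords_typeE m u k f l :
  nwords_type m u k f l =
  (u <= m.+1) * ncompositions u (k + l) * ncompositions (m.+1 - u) (k + ~~ f).
Proof.
elim: m u k f => [|m IH] u k f.
  rewrite /nwords_type /= peaksE /= addn0.
  by case: f; case: l; case: u => [|[|u]]; case: k => [|k]; rewrite //= muln0.
rewrite nwords_typeS !IH {IH}; case: f => /=.
- case: u => [|u]; first by case: k => [|k]; rewrite //= ?muln0.
  rewrite subSS subn0 subSS !addn0 (ltnS u) ltn0Sn.
  case: (leqP u m.+1) => le_u; rewrite ?mul0n ?mul1n ?muln0 //.
  case: k => [|k].
    rewrite andbF mul0n addn0 !add0n ncompositionsn0 subn_eq0.
    have [->|ne_u] := eqVneq u m.+1; last by rewrite leqNgt ltn_neqAle ne_u le_u !muln0.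
    by case: l => /=; rewrite ?bin0.
  by rewrite mul1n subSS subn0 addn1 addSn ncompositionsS mulnDl.
- rewrite !subn0 !mul1n !addn0 addn1 -mulnDr [ncompositions _ k + _]addnC.
  case: (ltngtP u m.+2) => [lt_u|lt_u|->].
  + by rewrite ltnS in lt_u; rewrite lt_u (subSn lt_u) -ncompositionsS.
  + by rewrite leqNgt (ltnW lt_u).
  + by rewrite ltnn subnn ncompositions0n /= !muln0.
Qed.

Lemma count_circular_peaks_cons m u k f : 0 < k ->
  count (fun w => (count id (f :: w) == u) && (circular_peaks (f :: w) == k)) (words m)
  = nwords_type m u (k - ~~ f) f true + nwords_type m u k f false.
Proof.
move=> k_gt0; rewrite /nwords_type -(permP (introT permPl (perm_filterC (last f) (words m)))).
rewrite count_cat !count_filter.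
congr (_ + _); apply: eq_count => w /=; rewrite circular_peaks_cons.
  case: (last f w) => /=; rewrite ?andbF // !andbT; congr andb.
  by case: (~~ f); rewrite ?addn0 ?subn0 //; apply/eqP/eqP; lia.
by case: (last f w); rewrite /= ?andbF ?andbT ?addn0.
Qed.

Lemma count_P_n11_circular_peaks n k : 0 < n -> 0 < k ->
  count (fun s => (count id s == n.+1) && (circular_peaks s == k)) (words (2 * n + 1))
  = 'C(n, k.-1) * 'C(n, k) + 'C(n.+1, k) * 'C(n.-1, k.-1).
Proof.
move=> n_gt0 k_gt0; rewrite addn1 [words _.+1]/= count_cat !count_map.
rewrite !count_circular_peaks_cons // !nwords_typeE.
have -> : (2 * n).+1 - n.+1 = n by lia.
have -> : n < (2 * n).+1 by lia.
case: n n_gt0 => // n _; case: k k_gt0 => // k _.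
rewrite subn1 /= !mul1n !addn0 !addn1 (binS n.+1 k) !(binS n k).
ring.
Qed.

Lemma height_size_eq1 s u : size s = 2 * u + 1 -> count id s = u.+1 ->
  height s (size s) = 1%R.
Proof.
move=> size_s count_s; rewrite /height take_size.
have count_neg : count negb s = u.
  by have := count_predC id s; rewrite count_s size_s (@eq_count _ _ negb) //; lia.
by rewrite count_s count_neg -addn1 PoszD addrAC subrr add0r.
Qed.

Lemma card_set_sum (T : finType) (P : pred T) : #|[set x | P x]| = \sum_x P x.
Proof. by rewrite -sum1dep_card big_mkcond; apply: eq_bigr => x _; case: (P x). Qed.

Theorem theorem8 (n k j : nat) (hn : 1 <= n) (hk : 1 <= k)
  (hj1 : 1 <= j) (hj2 : j <= 2 * n + 1) :
  (#|[set p : (2 * n + 1).-tuple bool |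
       [&& P_n11 p, circular_peaks p == k & vertices_le0 p == j]]|%:R : rat)
  = (1 / (2 * n + 1)%:R *
     ('C(n, k.-1) * 'C(n, k) + 'C(n.+1, k) * 'C(n.-1, k.-1))%:R)%R.
Proof.
set L := 2 * n + 1.
pose A (p : L.-tuple bool) := P_n11 p && (circular_peaks p == k).
have A_rot r p : A (rot_tuple r p) = A p.
  by rewrite /A /P_n11 /= count_rot circular_peaks_rot.
have rot_tuple_inj r : injective (fun p : L.-tuple bool => rot_tuple r p).
  by move=> p q /(congr1 val) /rot_inj /val_inj.
have rotations p : A p -> \sum_(r < L) (vertices_le0 (rot r p) == j) = 1.
  case/andP=> /eqP count_p _; rewrite -card_set_sum.
  have := card_rot_vertices_le0 (height_size_eq1 (size_tuple p) count_p).
  by rewrite size_tuple => /(_ j); apply; rewrite hj1.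
have double_count : \sum_p A p = L * \sum_p (A p && (vertices_le0 p == j)).
  transitivity (\sum_p \sum_(r < L) (A p && (vertices_le0 (rot r p) == j))).
    apply: eq_bigr => p _; case: (boolP (A p)) => [A_p|_] /=; last by rewrite big1.
    by rewrite rotations.
  rewrite exchange_big -[L in L * _]card_ord -sum_nat_const; apply: eq_bigr => r _.
  by rewrite [RHS](reindex_inj (rot_tuple_inj r)); apply: eq_bigr => p _; rewrite A_rot.
have count_A : \sum_p A p = 'C(n, k.-1) * 'C(n, k) + 'C(n.+1, k) * 'C(n.-1, k.-1).
  by rewrite -count_P_n11_circular_peaks // -sum_tuples_words.
have -> : #|[set p : L.-tuple bool | [&& P_n11 p, circular_peaks p == k & vertices_le0 p == j]]|
    = \sum_p (A p && (vertices_le0 p == j)).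
  by rewrite card_set_sum; apply: eq_bigr => p _; rewrite andbA.
rewrite -count_A double_count.
by rewrite natrM mulrA div1r mulVf ?mul1r // pnatr_eq0 /L addn1.
Qed.
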